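(* Suppose Assumptions 1 and 2 hold and problem (P) is feasible (equivalently $\sum_i(\underline{x}_i-\phi_i(\underline{x}_i))\le\sum_i d_i\le\sum_i(\bar{x}_i-\phi_i(\bar{x}_i))$). Consider the gradient ascent dynamics $$\dot{\lambda}=\frac{dg^m(\lambda)}{d\lambda}=\sum_{i=1}^N\Big(d_i-\hat{x}_i(\lambda)+\phi_i\big(\hat{x}_i(\lambda)\big)\Big),\qquad \lambda(0)\in\mathbb{R}.$$ Then $\lim_{t\to\infty}\lambda(t)=\lambda^*$, where $\lambda^*$ is a maximizer of $g^m$ over $\mathbb{R}$, and $(\hat{x}_1(\lambda^* ),\dots,\hat{x}_N(\lambda^* ))$ is an optimal solution of problem (P).
   Context: For $i=1,\dots,N$: $d_i\in\mathbb{R}$, $\mathcal{X}_i=[\underline{x}_i,\bar{x}_i]$ a nonempty closed interval, $f_i,\phi_i:\mathbb{R}\to\mathbb{R}$. Problem (P): minimize $\sum_{i=1}^N f_i(x_i)$ subject to $\sum_{i=1}^N d_i=\sum_{i=1}^N(x_i-\phi_i(x_i))$ and $x_i\in\mathcal{X}_i$ for all $i$. Assumption 1: for each $i$, $f_i$ and $\phi_i$ are continuously differentiable, $f_i$ is strictly convex on $\mathcal{X}_i$, $\phi_i$ is convex on $\mathcal{X}_i$, and $\phi_i'(x_i)<1$ for all $x_i\in\mathcal{X}_i$. Assumption 2: $f_i'(x_i)>0$ for all $x_i\in\mathcal{X}_i$ and all $i$. Local Lagrangian: $\mathcal{L}^r_i(x_i,\lambda)=f_i(x_i)+\lambda(d_i-x_i+\phi_i(x_i))$.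 Let $v_i(x_i)=f_i'(x_i)(1-\phi_i'(x_i))^{-1}$ on $\mathcal{X}_i$ (strictly increasing). Define for $\lambda\in\mathbb{R}$: $\hat{x}_i(\lambda)=\underline{x}_i$ if $\lambda\le v_i(\underline{x}_i)$; $\hat{x}_i(\lambda)=v_i^{-1}(\lambda)$ if $v_i(\underline{x}_i)<\lambda<v_i(\bar{x}_i)$; $\hat{x}_i(\lambda)=\bar{x}_i$ if $\lambda\ge v_i(\bar{x}_i)$. Modified dual function: $g^m(\lambda)=\sum_{i=1}^N\mathcal{L}^r_i(\hat{x}_i(\lambda),\lambda)$; its derivative is $\sum_i(d_i-\hat{x}_i(\lambda)+\phi_i(\hat{x}_i(\lambda)))$. *)

From Stdlib Require Import Reals Lra ClassicalEpsilon.
Open Scope R_scope.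

Fixpoint sumR (N : nat) (g : nat -> R) : R :=
  match N with
  | O => 0
  | S n => sumR n g + g n
  end.

Definition strictly_convex_on (h : R -> R) (a b : R) : Prop :=
  forall x y t, a <= x <= b -> a <= y <= b -> x <> y -> 0 < t < 1 ->
    h (t * x + (1 - t) * y) < t * h x + (1 - t) * h y.

Definition convex_on (h : R -> R) (a b : R) : Prop :=
  forall x y t, a <= x <= b -> a <= y <= b -> 0 <= t <= 1 ->
    h (t * x + (1 - t) * y) <= t * h x + (1 - t) * h y.

Definition vfun (df dphi : R -> R) (x : R) : R := df x / (1 - dphi x).

(* v_i^{-1}(lam): the point of [a,b] where v takes value lam (chosen by
   Hilbert epsilon; unique because v is strictly increasing on [a,b]). *)
Definition vinv (df dphi : R -> R) (a b lam : R) : R :=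
  epsilon (inhabits 0) (fun x => a <= x <= b /\ vfun df dphi x = lam).

Definition xhat (df dphi : R -> R) (a b lam : R) : R :=
  if Rle_dec lam (vfun df dphi a) then a
  else if Rle_dec (vfun df dphi b) lam then b
  else vinv df dphi a b lam.

Definition Lr (f phi : R -> R) (d x lam : R) : R := f x + lam * (d - x + phi x).

Definition gm (N : nat) (d xl xu : nat -> R) (f phi df dphi : nat -> R -> R)
  (lam : R) : R :=
  sumR N (fun i => Lr (f i) (phi i) (d i)
                      (xhat (df i) (dphi i) (xl i) (xu i) lam) lam).

Definition dgm (N : nat) (d xl xu : nat -> R) (phi df dphi : nat -> R -> R)
  (lam : R) : R :=
  sumR N (fun i => let xi := xhat (df i) (dphi i) (xl i) (xu i) lam in
                   d i - xi + phi i xi).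

Definition feasibleP (N : nat) (d xl xu : nat -> R) (phi : nat -> R -> R)
  (x : nat -> R) : Prop :=
  (forall i, (i < N)%nat -> xl i <= x i <= xu i) /\
  sumR N d = sumR N (fun i => x i - phi i (x i)).

Definition optimalP (N : nat) (d xl xu : nat -> R) (f phi : nat -> R -> R)
  (x : nat -> R) : Prop :=
  feasibleP N d xl xu phi x /\
  forall y, feasibleP N d xl xu phi y ->
    sumR N (fun i => f i (x i)) <= sumR N (fun i => f i (y i)).

From Stdlib Require Import Reals Lra Lia Ranalysis5 ClassicalEpsilon Classical_Prop.
Open Scope R_scope.

(* Since f_i is strictly convex and phi_i convex with phi_i' < 1, v_i is
   strictly increasing, so xhat_i(lam) is the continuous nondecreasing
   minimiser of L^r_i(., lam) over X_i.  As x - phi_i(x) is increasing, the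
   dual gradient G = sum_i (d_i - xhat_i + phi_i(xhat_i)) is continuous and
   nonincreasing, and feasibility gives G >= 0 far left and G <= 0 far right,
   hence a zero mu.  Along lam' = G(lam) the distance |lam - mu| never
   increases, so a trajectory stays on one side of mu, is monotone and bounded,
   and converges; its limit L is a zero of G, otherwise lam would drift
   linearly.  At a zero of G, xhat(L) is feasible and minimises the
   Lagrangian, which gives both the optimality of xhat(L) and, by weak
   duality, the maximality of g^m at L. *)

Lemma nondecreasing_of_derive_nonneg (h dh : R -> R) (a b : R) :
  a <= b ->
  (forall z, a <= z <= b -> derivable_pt_lim h z (dh z)) ->
  (forall z, a < z < b -> 0 <= dh z) -> h a <= h b.
Proof.
  intros Hab Hd Hpos.
  destruct (Rle_lt_or_eq_dec a b Hab) as [Hlt| <-]; [|lra].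
  destruct (MVT_cor2 h dh a b Hlt Hd) as [c [Hc Hcab]].
  assert (0 <= dh c * (b - a)) by (apply Rmult_le_pos; [apply Hpos|]; lra).
  lra.
Qed.

Lemma nonincreasing_of_derive_nonpos (h dh : R -> R) (a b : R) :
  a <= b ->
  (forall z, a <= z <= b -> derivable_pt_lim h z (dh z)) ->
  (forall z, a < z < b -> dh z <= 0) -> h b <= h a.
Proof.
  intros Hab Hd Hneg.
  enough (- h a <= - h b) by lra.
  apply (nondecreasing_of_derive_nonneg (- h)%F (fun z => - dh z) a b Hab).
  - intros z Hz. apply derivable_pt_lim_opp, Hd, Hz.
  - intros z Hz. specialize (Hneg z Hz). lra.
Qed.

Lemma convex_on_tangent_le (g : R -> R) (l a b x y : R) :
  convex_on g a b -> a <= x <= b -> a <= y <= b ->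
  derivable_pt_lim g x l -> g x + l * (y - x) <= g y.
Proof.
  intros Hc Hx Hy Hd.
  destruct (Req_dec x y) as [<-|Hne]; [lra|].
  apply Rnot_lt_le; intro Hlt.
  assert (Hyx : 0 < Rabs (y - x)) by (apply Rabs_pos_lt; lra).
  set (eps := (g x + l * (y - x) - g y) / Rabs (y - x)).
  assert (Heps : 0 < eps) by (apply Rdiv_lt_0_compat; lra).
  destruct (Hd eps Heps) as [[del Hdel] Hq]; simpl in Hq.
  set (t := Rmin 1 (del / (2 * Rabs (y - x)))).
  assert (Ht : 0 < t <= 1).
  { split; [apply Rmin_glb_lt; [lra|apply Rdiv_lt_0_compat; lra]|apply Rmin_l]. }
  set (h := t * (y - x)).
  assert (Hh0 : h <> 0) by (unfold h; intro E; apply Rmult_integral in E; lra).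
  assert (Hhdel : Rabs h < del).
  { unfold h. rewrite Rabs_mult, (Rabs_pos_eq t) by lra.
    assert (t * Rabs (y - x) <= del / (2 * Rabs (y - x)) * Rabs (y - x))
      by (apply Rmult_le_compat_r; [lra|apply Rmin_r]).
    replace (del / (2 * Rabs (y - x)) * Rabs (y - x)) with (del / 2) in H by (field; lra).
    lra. }
  specialize (Hq h Hh0 Hhdel).
  set (q := (g (x + h) - g x) / h) in Hq.
  (* convexity along the chord bounds the difference quotient by the slope of the chord *)
  assert (Hchord : (y - x) * q <= g y - g x).
  { assert (Hconv := Hc y x t Hy Hx ltac:(lra)).
    replace (t * y + (1 - t) * x) with (x + h) in Hconv by (unfold h; ring).
    replace (g (x + h)) with (g x + t * ((y - x) * q)) in Hconv
      by (unfold q, h; field; split; lra).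
    apply Rmult_le_reg_l with t; lra. }
  assert (Hclose : Rabs ((y - x) * q - (y - x) * l) < Rabs (y - x) * eps).
  { rewrite <- Rmult_minus_distr_l, Rabs_mult. apply Rmult_lt_compat_l; lra. }
  replace (Rabs (y - x) * eps) with (g x + l * (y - x) - g y) in Hclose
    by (unfold eps; field; lra).
  destruct (Rabs_def2 _ _ Hclose). lra.
Qed.

Lemma strictly_convex_on_convex_on (g : R -> R) (a b : R) :
  strictly_convex_on g a b -> convex_on g a b.
Proof.
  intros Hs x y t Hx Hy Ht.
  destruct (Req_dec x y) as [<-|Hne].
  { replace (t * x + (1 - t) * x) with x by ring. lra. }
  destruct (Req_dec t 0) as [->|H0].
  { replace (0 * x + (1 - 0) * y) with y by ring. lra. }
  destruct (Req_dec t 1) as [->|H1].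
  { replace (1 * x + (1 - 1) * y) with x by ring. lra. }
  left. apply Hs; auto; lra.
Qed.

Lemma derive_nondecreasing_of_convex (g : R -> R) (a b x y gx gy : R) :
  convex_on g a b -> a <= x <= b -> a <= y <= b -> x <= y ->
  derivable_pt_lim g x gx -> derivable_pt_lim g y gy -> gx <= gy.
Proof.
  intros Hc Hx Hy Hxy Hdx Hdy.
  destruct (Req_dec x y) as [<-|Hne].
  { rewrite (uniqueness_limite g x gx gy Hdx Hdy). lra. }
  assert (H1 := convex_on_tangent_le g gx a b x y Hc Hx Hy Hdx).
  assert (H2 := convex_on_tangent_le g gy a b y x Hc Hy Hx Hdy).
  apply Rnot_lt_le; intro Hlt.
  assert (gy * (y - x) < gx * (y - x)) by (apply Rmult_lt_compat_r; lra).
  lra.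
Qed.

Lemma derive_increasing_of_strictly_convex (g : R -> R) (a b x y gx gy : R) :
  strictly_convex_on g a b -> a <= x <= b -> a <= y <= b -> x < y ->
  derivable_pt_lim g x gx -> derivable_pt_lim g y gy -> gx < gy.
Proof.
  intros Hs Hx Hy Hxy Hdx Hdy.
  assert (Hc := strictly_convex_on_convex_on g a b Hs).
  set (m := (x + y) / 2).
  assert (Hm : a <= m <= b) by (unfold m; lra).
  assert (H1 := convex_on_tangent_le g gx a b x m Hc Hx Hm Hdx).
  assert (H2 := convex_on_tangent_le g gy a b y x Hc Hy Hx Hdy).
  assert (H3 := Hs x y (1/2) Hx Hy ltac:(lra) ltac:(lra)).
  replace (1 / 2 * x + (1 - 1 / 2) * y) with m in H3 by (unfold m; field).
  replace (m - x) with ((y - x) / 2) in H1 by (unfold m; field).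
  apply Rnot_le_lt; intro Hle.
  assert (gy * (y - x) <= gx * (y - x)) by (apply Rmult_le_compat_r; lra).
  lra.
Qed.
Section GeneralizedInverse.

Variables (v : R -> R) (a b : R).
Hypothesis v_increasing :
  forall x y, a <= x <= b -> a <= y <= b -> x < y -> v x < v y.

(* [x0] solves [v x0 = lam] on [a, b] when possible and is the nearest
   endpoint otherwise: this is the first-order condition for [xhat]. *)
Definition generalized_inverse (lam x0 : R) : Prop :=
  a <= x0 <= b /\
  (forall y, a <= y <= b -> y < x0 -> v y < lam) /\
  (forall y, a <= y <= b -> x0 < y -> lam < v y).

Lemma generalized_inverse_mono (l1 l2 x1 x2 : R) :
  l1 <= l2 -> generalized_inverse l1 x1 -> generalized_inverse l2 x2 -> x1 <= x2.
Proof.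
  intros Hl [H1 [H1l _]] [H2 [_ H2r]].
  apply Rnot_lt_le; intro Hlt.
  set (m := (x1 + x2) / 2).
  assert (v m < l1) by (apply H1l; unfold m; lra).
  assert (l2 < v m) by (apply H2r; unfold m; lra).
  lra.
Qed.

Lemma generalized_inverse_unique (lam x1 x2 : R) :
  generalized_inverse lam x1 -> generalized_inverse lam x2 -> x1 = x2.
Proof.
  intros H1 H2.
  apply Rle_antisym; eapply generalized_inverse_mono; eauto; lra.
Qed.

Lemma generalized_inverse_value (y : R) :
  a <= y <= b -> generalized_inverse (v y) y.
Proof.
  intros Hy. split; [exact Hy|split]; intros z Hz Hzy; apply v_increasing; auto.
Qed.

Variable X : R -> R.
Hypothesis X_generalized_inverse : forall lam, generalized_inverse lam (X lam).

Lemma generalized_inverse_lower_near (l0 eps : R) :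
  0 < eps -> exists del, 0 < del /\ forall l, l0 - del < l -> X l0 - eps < X l.
Proof.
  intros Heps.
  destruct (X_generalized_inverse l0) as [Hx0 [Hleft _]].
  destruct (Rlt_dec a (X l0)) as [Hax|Hax].
  - set (y := Rmax a (X l0 - eps / 2)).
    assert (Hy : a <= y <= b) by (split; [apply Rmax_l|apply Rmax_lub; lra]).
    assert (Hyx : y < X l0) by (apply Rmax_lub_lt; lra).
    assert (Hvy := Hleft y Hy Hyx).
    exists (l0 - v y). split; [lra|]. intros l Hl.
    assert (y <= X l).
    { apply (generalized_inverse_mono (v y) l); [lra|apply generalized_inverse_value; auto|auto]. }
    assert (X l0 - eps / 2 <= y) by apply Rmax_r.
    lra.
  - exists 1. split; [lra|]. intros l _.
    destruct (X_generalized_inverse l) as [Hxl _]. lra.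
Qed.

Lemma generalized_inverse_upper_near (l0 eps : R) :
  0 < eps -> exists del, 0 < del /\ forall l, l < l0 + del -> X l < X l0 + eps.
Proof.
  intros Heps.
  destruct (X_generalized_inverse l0) as [Hx0 [_ Hright]].
  destruct (Rlt_dec (X l0) b) as [Hxb|Hxb].
  - set (y := Rmin b (X l0 + eps / 2)).
    assert (Hy : a <= y <= b) by (split; [apply Rmin_glb; lra|apply Rmin_l]).
    assert (Hyx : X l0 < y) by (apply Rmin_glb_lt; lra).
    assert (Hvy := Hright y Hy Hyx).
    exists (v y - l0). split; [lra|]. intros l Hl.
    assert (X l <= y).
    { apply (generalized_inverse_mono l (v y)); [lra|auto|apply generalized_inverse_value; auto]. }
    assert (y <= X l0 + eps / 2) by apply Rmin_r.
    lra.
  - exists 1. split; [lra|]. intros l _.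
    destruct (X_generalized_inverse l) as [Hxl _]. lra.
Qed.

Lemma generalized_inverse_continuous : continuity X.
Proof.
  intros l0 eps Heps.
  destruct (generalized_inverse_lower_near l0 eps Heps) as [d1 [Hd1 Hlo]].
  destruct (generalized_inverse_upper_near l0 eps Heps) as [d2 [Hd2 Hhi]].
  exists (Rmin d1 d2). split; [apply Rmin_glb_lt; lra|].
  intros l [_ Hl]; simpl in *; unfold R_dist in *.
  assert (Rmin d1 d2 <= d1) by apply Rmin_l.
  assert (Rmin d1 d2 <= d2) by apply Rmin_r.
  destruct (Rabs_def2 _ _ Hl).
  assert (X l0 - eps < X l) by (apply Hlo; lra).
  assert (X l < X l0 + eps) by (apply Hhi; lra).
  apply Rabs_def1; lra.
Qed.

End GeneralizedInverse.

Section Component.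

Variables (f phi df dphi : R -> R) (a b : R).
Hypothesis a_le_b : a <= b.
Hypothesis f_derive : forall x, derivable_pt_lim f x (df x).
Hypothesis df_continuous : continuity df.
Hypothesis phi_derive : forall x, derivable_pt_lim phi x (dphi x).
Hypothesis dphi_continuous : continuity dphi.
Hypothesis f_strictly_convex : strictly_convex_on f a b.
Hypothesis phi_convex : convex_on phi a b.
Hypothesis dphi_lt_1 : forall x, a <= x <= b -> dphi x < 1.
Hypothesis df_pos : forall x, a <= x <= b -> 0 < df x.

Lemma vfun_increasing (x y : R) :
  a <= x <= b -> a <= y <= b -> x < y -> vfun df dphi x < vfun df dphi y.
Proof.
  intros Hx Hy Hxy.
  assert (Hf := derive_increasing_of_strictly_convex f a b x y _ _
                  f_strictly_convex Hx Hy Hxy (f_derive x) (f_derive y)).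
  assert (Hphi := derive_nondecreasing_of_convex phi a b x y _ _
                    phi_convex Hx Hy ltac:(lra) (phi_derive x) (phi_derive y)).
  assert (dphi x < 1) by auto. assert (dphi y < 1) by auto.
  assert (0 < df x) by auto.
  unfold vfun, Rdiv.
  apply Rlt_le_trans with (df y * / (1 - dphi x)).
  - apply Rmult_lt_compat_r; [apply Rinv_0_lt_compat|]; lra.
  - apply Rmult_le_compat_l; [lra|]. apply Rinv_le_contravar; lra.
Qed.

Lemma vfun_continuous_pt (x : R) : a <= x <= b -> continuity_pt (vfun df dphi) x.
Proof.
  intros Hx. unfold vfun.
  apply (continuity_pt_div df (fun z => 1 - dphi z)); [apply df_continuous| |].
  - apply (continuity_pt_minus (fct_cte 1) dphi); [apply continuity_const; intros ? ?; reflexivity|].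
    apply dphi_continuous.
  - assert (dphi x < 1) by auto. lra.
Qed.

Lemma xhat_generalized_inverse (lam : R) :
  generalized_inverse (vfun df dphi) a b lam (xhat df dphi a b lam).
Proof.
  assert (Hinc := vfun_increasing).
  set (v := vfun df dphi) in *.
  unfold xhat; fold v.
  destruct (Rle_dec lam (v a)) as [Ha|Ha].
  { split; [lra|split]; intros y Hy Hay; [lra|].
    assert (v a < v y) by (apply Hinc; lra). lra. }
  destruct (Rle_dec (v b) lam) as [Hb|Hb].
  { split; [lra|split]; intros y Hy Hyb; [|lra].
    assert (v y < v b) by (apply Hinc; lra). lra. }
  assert (Hsol : exists x, a <= x <= b /\ v x = lam).
  { assert (Hab : a < b) by (destruct (Req_dec a b) as [<-|]; lra).
    destruct (IVT_interv (fun x => v x - lam) a b) as [x [Hx Hx0]]; [| |lra|lra|].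
    - intros x Hx. apply continuity_pt_minus; [apply vfun_continuous_pt, Hx|].
      apply continuity_const; intros ? ?; reflexivity.
    - exact Hab.
    - exists x. split; [exact Hx|lra]. }
  destruct (epsilon_spec (inhabits 0) _ Hsol) as [Hx0 Hvx0].
  unfold vinv; fold v.
  set (x0 := epsilon _ _) in *.
  rewrite <- Hvx0.
  apply generalized_inverse_value; auto.
Qed.

Lemma xhat_in_interval (lam : R) : a <= xhat df dphi a b lam <= b.
Proof. apply (xhat_generalized_inverse lam). Qed.

Lemma xhat_nondecreasing (l1 l2 : R) :
  l1 <= l2 -> xhat df dphi a b l1 <= xhat df dphi a b l2.
Proof.
  intros Hl. apply (generalized_inverse_mono (vfun df dphi) a b l1 l2 _ _ Hl);
    apply xhat_generalized_inverse.
Qed.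

Lemma xhat_continuous : continuity (xhat df dphi a b).
Proof.
  apply (generalized_inverse_continuous (vfun df dphi) a b).
  - exact vfun_increasing.
  - exact xhat_generalized_inverse.
Qed.

Lemma xhat_right_end (lam : R) : vfun df dphi b <= lam -> xhat df dphi a b lam = b.
Proof.
  intros Hb.
  apply (generalized_inverse_unique (vfun df dphi) a b lam);
    [apply xhat_generalized_inverse|].
  split; [lra|split]; intros y Hy Hyb; [|lra].
  assert (vfun df dphi y < vfun df dphi b) by (apply vfun_increasing; lra). lra.
Qed.

Lemma sub_phi_nondecreasing (x y : R) :
  a <= x -> x <= y -> y <= b -> x - phi x <= y - phi y.
Proof.
  intros Hax Hxy Hyb.
  apply (nondecreasing_of_derive_nonneg (fun z => z - phi z) (fun z => 1 - dphi z) x y Hxy).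
  - intros z _. apply (derivable_pt_lim_minus id phi); [apply derivable_pt_lim_id|auto].
  - intros z Hz. assert (dphi z < 1) by (apply dphi_lt_1; lra). lra.
Qed.

Lemma Lr_derive (d lam z : R) : a <= z <= b ->
  derivable_pt_lim (fun x => Lr f phi d x lam) z
    ((1 - dphi z) * (vfun df dphi z - lam)).
Proof.
  intros Hz.
  replace ((1 - dphi z) * (vfun df dphi z - lam)) with (df z + lam * (0 - 1 + dphi z))
    by (unfold vfun; assert (dphi z < 1) by auto; field; lra).
  apply (derivable_pt_lim_plus f (fun x => lam * (d - x + phi x))); [auto|].
  apply (derivable_pt_lim_scal (fun x => d - x + phi x)).
  apply (derivable_pt_lim_plus (fun x => d - x) phi); [|auto].
  apply (derivable_pt_lim_minus (fct_cte d) id);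
    [apply derivable_pt_lim_const|apply derivable_pt_lim_id].
Qed.

Lemma xhat_minimizes_Lr (d lam y : R) : a <= y <= b ->
  Lr f phi d (xhat df dphi a b lam) lam <= Lr f phi d y lam.
Proof.
  intros Hy.
  destruct (xhat_generalized_inverse lam) as [Hx0 [Hleft Hright]].
  set (x0 := xhat df dphi a b lam) in *.
  destruct (Rle_dec x0 y) as [Hxy|Hxy].
  - apply (nondecreasing_of_derive_nonneg (fun x => Lr f phi d x lam)
             (fun z => (1 - dphi z) * (vfun df dphi z - lam)) x0 y Hxy).
    + intros z Hz. apply Lr_derive. lra.
    + intros z Hz. assert (dphi z < 1) by (apply dphi_lt_1; lra).
      assert (lam < vfun df dphi z) by (apply Hright; lra).
      apply Rmult_le_pos; lra.
  - apply (nonincreasing_of_derive_nonpos (fun x => Lr f phi d x lam)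
             (fun z => (1 - dphi z) * (vfun df dphi z - lam)) y x0 ltac:(lra)).
    + intros z Hz. apply Lr_derive. lra.
    + intros z Hz. assert (dphi z < 1) by (apply dphi_lt_1; lra).
      assert (vfun df dphi z < lam) by (apply Hleft; lra).
      assert (0 < 1 - dphi z) by lra.
      assert (0 < (1 - dphi z) * (lam - vfun df dphi z)) by (apply Rmult_lt_0_compat; lra).
      lra.
Qed.

End Component.

Definition cvg_at_infinity (g : R -> R) (L : R) : Prop :=
  forall eps, 0 < eps -> exists T, forall t, T <= t -> Rabs (g t - L) < eps.

Lemma nondecreasing_bounded_cvg (g : R -> R) (s0 B : R) :
  (forall s t, s0 <= s -> s <= t -> g s <= g t) ->
  (forall t, s0 <= t -> g t <= B) ->
  exists L, cvg_at_infinity g L /\ L <= B /\ forall t, s0 <= t -> g t <= L.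
Proof.
  intros Hmon Hbnd.
  set (E := fun x => exists t, s0 <= t /\ x = g t).
  destruct (completeness E) as [L [Hub Hleast]].
  - exists B. intros x [t [Ht ->]]. auto.
  - exists (g s0), s0. split; [lra|reflexivity].
  - assert (Hup : forall t, s0 <= t -> g t <= L) by (intros t Ht; apply Hub; exists t; auto).
    exists L. split; [|split; [apply Hleast; intros x [t [Ht ->]]; auto|exact Hup]].
    intros eps Heps.
    assert (Hex : exists T, s0 <= T /\ L - eps < g T).
    { apply NNPP; intro Hn.
      enough (L <= L - eps) by lra.
      apply Hleast. intros x [t [Ht ->]].
      apply Rnot_lt_le; intro Hlt. apply Hn. exists t. auto. }
    destruct Hex as [T [HT HgT]]. exists T. intros t Ht.
    assert (g T <= g t) by (apply Hmon; lra).
    assert (g t <= L) by (apply Hup; lra).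
    apply Rabs_def1; lra.
Qed.

Section AutonomousODE.

Variables (G lam : R -> R) (mu : R).
Hypothesis G_nonincreasing : forall x y, x <= y -> G y <= G x.
Hypothesis G_mu : G mu = 0.
Hypothesis lam_ode : forall t, 0 < t -> derivable_pt_lim lam t (G (lam t)).

Lemma G_points_to_equilibrium (x : R) : (x - mu) * G x <= 0.
Proof.
  destruct (Rle_dec x mu) as [Hx|Hx].
  - assert (0 <= G x) by (rewrite <- G_mu; auto). nra.
  - assert (G x <= 0) by (rewrite <- G_mu; apply G_nonincreasing; lra). nra.
Qed.

Lemma dist_equilibrium_nonincreasing (s t : R) : 0 < s -> s <= t ->
  (lam t - mu) * (lam t - mu) <= (lam s - mu) * (lam s - mu).
Proof.
  intros Hs Hst.
  apply (nonincreasing_of_derive_nonpos (fun u => (lam u - mu) * (lam u - mu))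
           (fun u => G (lam u) * (lam u - mu) + (lam u - mu) * G (lam u)) s t Hst).
  - intros z Hz.
    assert (Hd : derivable_pt_lim (fun u => lam u - mu) z (G (lam z))).
    { replace (G (lam z)) with (G (lam z) - 0) by ring.
      apply (derivable_pt_lim_minus lam (fct_cte mu));
        [apply lam_ode; lra|apply derivable_pt_lim_const]. }
    apply (derivable_pt_lim_mult (fun u => lam u - mu) (fun u => lam u - mu)); exact Hd.
  - intros z _. assert (H := G_points_to_equilibrium (lam z)). lra.
Qed.

(* A trajectory cannot cross the equilibrium: at a crossing time its distance
   to [mu] would be 0, and that distance never increases. *)
Lemma stays_below_equilibrium (s t : R) : 0 < s -> s <= t -> lam s <= mu -> lam t <= mu.
Proof.
  intros Hs Hst Hbelow.
  apply Rnot_lt_le; intro Habove.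
  assert (Hcross : exists c, s <= c <= t /\ lam c = mu).
  { destruct (Req_dec (lam s) mu) as [Heq|Hne]; [exists s; split; [lra|exact Heq]|].
    destruct (Rle_lt_or_eq_dec s t Hst) as [Hlt| <-]; [|lra].
    destruct (IVT_interv (fun u => lam u - mu) s t) as [c [Hc Hc0]]; [| |lra|lra|].
    - intros c Hc. apply continuity_pt_minus; [|apply continuity_const; intros ? ?; reflexivity].
      apply derivable_continuous_pt. exists (G (lam c)). apply lam_ode. lra.
    - exact Hlt.
    - exists c. split; [exact Hc|lra]. }
  destruct Hcross as [c [Hc Hlc]].
  assert (H := dist_equilibrium_nonincreasing c t ltac:(lra) ltac:(lra)).
  rewrite Hlc in H. nra.
Qed.

Lemma nondecreasing_below_equilibrium (s t : R) : 0 < s -> s <= t -> lam s <= mu ->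
  lam s <= lam t.
Proof.
  intros Hs Hst Hbelow.
  apply (nondecreasing_of_derive_nonneg lam (fun u => G (lam u)) s t Hst).
  - intros z Hz. apply lam_ode. lra.
  - intros z Hz. rewrite <- G_mu. apply G_nonincreasing.
    apply (stays_below_equilibrium s); lra.
Qed.

(* The limit [L] is an equilibrium: if [G L > 0], [lam] would grow at least
   linearly past [L]. *)
Lemma cvg_from_below_equilibrium (s : R) : 0 < s -> lam s <= mu ->
  exists L, cvg_at_infinity lam L /\ G L = 0.
Proof.
  intros Hs Hbelow.
  destruct (nondecreasing_bounded_cvg lam s mu) as [L [HL [HLmu Hup]]].
  - intros u t Hu Hut. apply nondecreasing_below_equilibrium; try lra.
    apply (stays_below_equilibrium s); lra.
  - intros t Ht. apply (stays_below_equilibrium s); lra.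
  - exists L. split; [exact HL|].
    assert (HGL : 0 <= G L) by (rewrite <- G_mu; auto).
    destruct (Rle_lt_or_eq_dec 0 (G L) HGL) as [Hpos|Hzero]; [exfalso|auto].
    set (t := s + (L - lam s + 1) / G L).
    assert (Hst : 0 <= (L - lam s + 1) / G L).
    { apply Rlt_le, Rdiv_lt_0_compat; [|exact Hpos]. assert (lam s <= L) by (apply Hup; lra). lra. }
    assert (Hdrift : lam s - G L * s <= lam t - G L * t).
    { apply (nondecreasing_of_derive_nonneg (fun u => lam u - G L * u)
               (fun u => G (lam u) - G L * 1) s t ltac:(unfold t; lra)).
      - intros z Hz. apply (derivable_pt_lim_minus lam (fun u => G L * u)).
        + apply lam_ode. lra.
        + apply (derivable_pt_lim_scal id), derivable_pt_lim_id.
      - intros z Hz. assert (G L <= G (lam z)) by (apply G_nonincreasing, Hup; lra). lra. }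
    assert (lam t <= L) by (apply Hup; unfold t; lra).
    assert (G L * (t - s) = L - lam s + 1) by (unfold t; field; lra).
    lra.
Qed.

End AutonomousODE.

Lemma autonomous_ode_cvg (G lam : R -> R) (mu : R) :
  (forall x y, x <= y -> G y <= G x) -> G mu = 0 ->
  (forall t, 0 < t -> derivable_pt_lim lam t (G (lam t))) ->
  exists L, cvg_at_infinity lam L /\ G L = 0.
Proof.
  intros HG Hmu Hode.
  destruct (Rle_dec (lam 1) mu) as [Hbelow|Habove].
  { apply (cvg_from_below_equilibrium G lam mu HG Hmu Hode 1); lra. }
  (* above the equilibrium, apply the previous case to [t |-> - lam t] *)
  destruct (cvg_from_below_equilibrium (fun x => - G (- x)) (fun t => - lam t) (- mu))
    with 1 as [L [HL HGL]]; try lra.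
  - intros x y Hxy. assert (G (- x) <= G (- y)) by (apply HG; lra). lra.
  - rewrite Ropp_involutive, Hmu. ring.
  - intros t Ht. rewrite Ropp_involutive.
    apply (derivable_pt_lim_opp lam), Hode, Ht.
  - exists (- L). split; [|lra].
    intros eps Heps. destruct (HL eps Heps) as [T HT]. exists T. intros t Ht.
    replace (lam t - - L) with (- (- lam t - L)) by ring.
    rewrite Rabs_Ropp. auto.
Qed.

Lemma sumR_le (n : nat) (g h : nat -> R) :
  (forall i, (i < n)%nat -> g i <= h i) -> sumR n g <= sumR n h.
Proof.
  induction n as [|n IH]; intros H; simpl; [lra|].
  assert (sumR n g <= sumR n h) by (apply IH; intros; apply H; lia).
  assert (g n <= h n) by (apply H; lia).
  lra.
Qed.

Lemma sumR_continuous (n : nat) (F : nat -> R -> R) :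
  (forall i, (i < n)%nat -> continuity (F i)) -> continuity (fun x => sumR n (fun i => F i x)).
Proof.
  induction n as [|n IH]; intros H; simpl.
  - apply continuity_const. intros ? ?. reflexivity.
  - apply (continuity_plus (fun x => sumR n (fun i => F i x)) (F n)).
    + apply IH. intros; apply H; lia.
    + apply H; lia.
Qed.

Lemma finite_lower_bound (n : nat) (g : nat -> R) :
  exists m, m <= 0 /\ forall i, (i < n)%nat -> m <= g i.
Proof.
  induction n as [|n [m [Hm Hbound]]].
  - exists 0. split; [lra|]. intros; lia.
  - exists (Rmin m (g n)). split; [apply Rle_trans with m; [apply Rmin_l|exact Hm]|].
    intros i Hi. destruct (Nat.eq_dec i n) as [->|Hne]; [apply Rmin_r|].
    apply Rle_trans with m; [apply Rmin_l|apply Hbound; lia].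
Qed.

Lemma sumR_Lr (n : nat) (f phi : nat -> R -> R) (d x : nat -> R) (lam : R) :
  sumR n (fun i => Lr (f i) (phi i) (d i) (x i) lam) =
  sumR n (fun i => f i (x i)) + lam * (sumR n d - sumR n (fun i => x i - phi i (x i))).
Proof. induction n as [|n IH]; simpl; [ring|rewrite IH; unfold Lr; ring]. Qed.

Lemma sumR_balance (n : nat) (d y : nat -> R) (phi : nat -> R -> R) :
  sumR n (fun i => d i - y i + phi i (y i)) = sumR n d - sumR n (fun i => y i - phi i (y i)).
Proof. induction n as [|n IH]; simpl; [ring|rewrite IH; ring]. Qed.

Section DualProblem.

Variables (N : nat) (d xl xu : nat -> R) (f phi df dphi : nat -> R -> R).
Hypothesis Hint : forall i, (i < N)%nat -> xl i <= xu i.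
Hypothesis Hdf : forall i, (i < N)%nat -> forall x, derivable_pt_lim (f i) x (df i x).
Hypothesis Hdfc : forall i, (i < N)%nat -> continuity (df i).
Hypothesis Hdphi : forall i, (i < N)%nat -> forall x, derivable_pt_lim (phi i) x (dphi i x).
Hypothesis Hdphic : forall i, (i < N)%nat -> continuity (dphi i).
Hypothesis Hfconv : forall i, (i < N)%nat -> strictly_convex_on (f i) (xl i) (xu i).
Hypothesis Hphiconv : forall i, (i < N)%nat -> convex_on (phi i) (xl i) (xu i).
Hypothesis Hdphi1 : forall i, (i < N)%nat -> forall x, xl i <= x <= xu i -> dphi i x < 1.
Hypothesis Hdfpos : forall i, (i < N)%nat -> forall x, xl i <= x <= xu i -> 0 < df i x.

Local Notation X i lam := (xhat (df i) (dphi i) (xl i) (xu i) lam).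
Local Notation G := (dgm N d xl xu phi df dphi).
Local Notation gm := (gm N d xl xu f phi df dphi).

Lemma dgm_eq (lam : R) : G lam = sumR N d - sumR N (fun i => X i lam - phi i (X i lam)).
Proof. exact (sumR_balance N d (fun i => X i lam) phi). Qed.

Lemma gm_eq (lam : R) : gm lam = sumR N (fun i => f i (X i lam)) + lam * G lam.
Proof. unfold gm at 1. rewrite sumR_Lr, dgm_eq. reflexivity. Qed.

Lemma dgm_nonincreasing (l1 l2 : R) : l1 <= l2 -> G l2 <= G l1.
Proof.
  intros Hl. rewrite !dgm_eq.
  enough (sumR N (fun i => X i l1 - phi i (X i l1)) <= sumR N (fun i => X i l2 - phi i (X i l2)))
    by lra.
  apply sumR_le. intros i Hi.
  destruct (xhat_in_interval (f i) (phi i) (df i) (dphi i) (xl i) (xu i)) with (lam := l1); auto.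
  destruct (xhat_in_interval (f i) (phi i) (df i) (dphi i) (xl i) (xu i)) with (lam := l2); auto.
  apply (sub_phi_nondecreasing (phi i) (dphi i) (xl i) (xu i)); auto.
  apply (xhat_nondecreasing (f i) (phi i)); auto.
Qed.

Lemma dgm_continuous : continuity G.
Proof.
  apply (sumR_continuous N (fun i lam => d i - X i lam + phi i (X i lam))).
  intros i Hi.
  assert (HXc : continuity (fun lam => X i lam))
    by (apply (xhat_continuous (f i) (phi i)); auto).
  intros lam.
  apply continuity_pt_plus.
  - apply continuity_pt_minus; [apply continuity_const; intros ? ?; reflexivity|apply HXc].
  - apply (continuity_pt_comp (fun lam => X i lam) (phi i)); [apply HXc|].
    apply derivable_continuous_pt. exists (dphi i (X i lam)). apply Hdphi, Hi.
Qed.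

(* For [lam] below every [v_i(xl_i)] all [xhat_i] sit at [xl_i], for [lam]
   above every [v_i(xu_i)] at [xu_i]; feasibility puts the sign change of [G]
   in between. *)
Lemma dgm_has_zero : (exists x, feasibleP N d xl xu phi x) -> exists mu, G mu = 0.
Proof.
  intros [x [Hx Hbal]].
  destruct (finite_lower_bound N (fun i => vfun (df i) (dphi i) (xl i))) as [m [Hm0 Hm]].
  destruct (finite_lower_bound N (fun i => - vfun (df i) (dphi i) (xu i))) as [M' [HM0 HM]].
  assert (HGm : 0 <= G m).
  { rewrite dgm_eq, Hbal.
    enough (sumR N (fun i => X i m - phi i (X i m)) <= sumR N (fun i => x i - phi i (x i)))
      by lra.
    apply sumR_le. intros i Hi.
    assert (HXm : X i m = xl i).
    { unfold xhat. destruct Rle_dec as [_|Hn]; [reflexivity|exfalso; apply Hn, Hm, Hi]. }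
    rewrite HXm. destruct (Hx i Hi).
    apply (sub_phi_nondecreasing (phi i) (dphi i) (xl i) (xu i)); auto; lra. }
  assert (HGM : G (- M') <= 0).
  { rewrite dgm_eq, Hbal.
    enough (sumR N (fun i => x i - phi i (x i)) <= sumR N (fun i => X i (- M') - phi i (X i (- M'))))
      by lra.
    apply sumR_le. intros i Hi.
    assert (HXM : X i (- M') = xu i).
    { apply (xhat_right_end (f i) (phi i)); auto. specialize (HM i Hi). simpl in HM. lra. }
    rewrite HXM. destruct (Hx i Hi).
    apply (sub_phi_nondecreasing (phi i) (dphi i) (xl i) (xu i)); auto; lra. }
  destruct (IVT_cor G m (- M') dgm_continuous ltac:(lra) ltac:(nra)) as [mu [_ Hmu]].
  exists mu. exact Hmu.
Qed.

Lemma gm_le_Lagrangian (lam : R) (y : nat -> R) :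
  (forall i, (i < N)%nat -> xl i <= y i <= xu i) ->
  gm lam <= sumR N (fun i => Lr (f i) (phi i) (d i) (y i) lam).
Proof.
  intros Hy. apply sumR_le. intros i Hi.
  apply (xhat_minimizes_Lr (f i) (phi i)); auto.
Qed.

Lemma gm_maximal_at_dgm_zero (L : R) : G L = 0 -> forall mu, gm mu <= gm L.
Proof.
  intros HGL mu.
  apply Rle_trans with (sumR N (fun i => Lr (f i) (phi i) (d i) (X i L) mu)).
  - apply gm_le_Lagrangian. intros i Hi. apply (xhat_in_interval (f i) (phi i)); auto.
  - rewrite sumR_Lr, gm_eq, <- dgm_eq, HGL. lra.
Qed.

Lemma xhat_optimal_at_dgm_zero (L : R) :
  G L = 0 -> optimalP N d xl xu f phi (fun i => X i L).
Proof.
  intros HGL.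
  assert (Hbox : forall i, (i < N)%nat -> xl i <= X i L <= xu i)
    by (intros i Hi; apply (xhat_in_interval (f i) (phi i)); auto).
  split; [split; [exact Hbox|rewrite dgm_eq in HGL; lra]|].
  intros y [Hy Hbal].
  assert (H := gm_le_Lagrangian L y Hy).
  rewrite gm_eq, HGL, sumR_Lr, Hbal in H. lra.
Qed.

End DualProblem.

Theorem theorem1
  (N : nat) (d xl xu : nat -> R) (f phi df dphi : nat -> R -> R)
  (Hint : forall i, (i < N)%nat -> xl i <= xu i)
  (Hdf : forall i, (i < N)%nat -> forall x, derivable_pt_lim (f i) x (df i x))
  (Hdfc : forall i, (i < N)%nat -> continuity (df i))
  (Hdphi : forall i, (i < N)%nat -> forall x, derivable_pt_lim (phi i) x (dphi i x))
  (Hdphic : forall i, (i < N)%nat -> continuity (dphi i))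
  (Hfconv : forall i, (i < N)%nat -> strictly_convex_on (f i) (xl i) (xu i))
  (Hphiconv : forall i, (i < N)%nat -> convex_on (phi i) (xl i) (xu i))
  (Hdphi1 : forall i, (i < N)%nat -> forall x, xl i <= x <= xu i -> dphi i x < 1)
  (Hdfpos : forall i, (i < N)%nat -> forall x, xl i <= x <= xu i -> 0 < df i x)
  (Hfeas : exists x, feasibleP N d xl xu phi x)
  (lam : R -> R)
  (Hode : forall t, 0 < t ->
     derivable_pt_lim lam t (dgm N d xl xu phi df dphi (lam t))) :
  exists lamstar : R,
    (forall eps, 0 < eps -> exists T, forall t, T <= t -> Rabs (lam t - lamstar) < eps) /\
    (forall mu, gm N d xl xu f phi df dphi mu <= gm N d xl xu f phi df dphi lamstar) /\
    optimalP N d xl xu f phi (fun i => xhat (df i) (dphi i) (xl i) (xu i) lamstar).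
Proof.
  destruct (dgm_has_zero N d xl xu f phi df dphi) as [mu Hmu]; auto.
  destruct (autonomous_ode_cvg (dgm N d xl xu phi df dphi) lam mu) as [L [HL HGL]];
    [apply (dgm_nonincreasing N d xl xu f phi df dphi); auto|exact Hmu|exact Hode|].
  exists L. split; [exact HL|split].
  - apply (gm_maximal_at_dgm_zero N d xl xu f phi df dphi); auto.
  - apply (xhat_optimal_at_dgm_zero N d xl xu f phi df dphi); auto.
Qed.
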